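(* Let $\psi_0$ be an eigenfunction of $-\frac12\Delta^\otimes$ (on antisymmetric functions) for the eigenvalue $\omega_0$, whose expansion $\psi_0=\sum_{\overline k}C(\overline k)\Lambda_{j=1}^{\overline N}e^{ik_jx_j}$ satisfies condition (adr), and assume $\int_{\overline{\mathbb T}}|\psi_0(\overline x)|^2d\overline x=Z$. Then the electronic charge density of $\psi_0$ is uniform: $\rho^e(x)=-e\sum_{j=1}^{\overline N}\int_{\mathbb T^{\overline N-1}}|\psi_0(\overline x)|^2\big|_{x_j=x}\prod_{l\ne j}dx_l=-eZ$ for all $x\in\mathbb T$. Equivalently, $\int_{\mathbb T^{\overline N-1}}|\psi_0(\overline x)|^2\big|_{x_1=x}dx_2\cdots dx_{\overline N}=Z/\overline N$ for all $x\in\mathbb T$.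
   Context: Fix $N\in\mathbb N$, $e>0$, $Z>0$. $\mathbb T:=\mathbb R^3/N\mathbb Z^3$, $\overline N:=N^3$, $\overline{\mathbb T}:=\mathbb T^{\overline N}$ with points $\overline x=(x_1,\dots,x_{\overline N})$, $\Xi:=\frac{2\pi}N\mathbb Z^3$, $\Delta^\otimes=\sum_j\Delta_{x_j}$. $\omega_0$ is the minimal eigenvalue of $-\frac12\Delta^\otimes$ on antisymmetric functions on $\overline{\mathbb T}$. The exterior product is $[\Lambda_{j=1}^{\overline N}f_j](\overline x)=\frac1{\sqrt{\overline N!}}\sum_{\pi\in S_{\overline N}}(-1)^{|\pi|}\prod_{j}f_j(x_{\pi(j)})$. Every eigenfunction $\psi_0$ for $\omega_0$ has an expansion $\psi_0=\sum_{\overline k}C(\overline k)\Lambda_{j=1}^{\overline N}e^{ik_jx_j}$ over sets $\overline k=\{k_1,\dots,k_{\overline N}\}$ of distinct $k_j\in\Xi$ with $\frac12\sum_jk_j^2=\omega_0$. Condition (adr): for any two distinct sets $\overline k\neq\overline k'$ with $C(\overline k)\neq0\neq C(\overline k')$ one has $\#(\overline k\setminus\overline k')\ge2$. *)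

From HB Require Import structures.
From mathcomp Require Import all_boot all_fingroup.
From mathcomp Require Import ssralg ssrint.
From Stdlib Require Import Reals.

Unset Printing Implicit Defensive.

Local Open Scope R_scope.

Record Cx := mkC { re : R; im : R }.
Definition C0 : Cx := mkC 0 0.
Definition C1 : Cx := mkC 1 0.
Definition Cadd (z w : Cx) : Cx := mkC (re z + re w) (im z + im w).
Definition Cmul (z w : Cx) : Cx :=
  mkC (re z * re w - im z * im w) (re z * im w + im z * re w).
Definition Cscale (r : R) (z : Cx) : Cx := mkC (r * re z) (r * im z).
Definition Cexpi (theta : R) : Cx := mkC (cos theta) (sin theta).
Definition Cnorm2 (z : Cx) : R := re z * re z + im z * im z.

Definition intR (z : int) : R :=
  match z with Posz n => INR n | Negz n => - INR (S n) end.

(* A momentum k in Xi = (2 pi / N) Z^3 is represented by its integer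
   coordinates m in Z^3, with k = (2 pi / N) m. *)
Definition Mom := (int * int * int)%type.

Definition kdot (N : nat) (m : Mom) (p : R * R * R) : R :=
  let '(m1, m2, m3) := m in let '(p1, p2, p3) := p in
  (2 * PI / INR N) * (intR m1 * p1 + intR m2 * p2 + intR m3 * p3).

Definition knorm2 (N : nat) (m : Mom) : R :=
  let '(m1, m2, m3) := m in
  (2 * PI / INR N) ^ 2 * (intR m1 ^ 2 + intR m2 ^ 2 + intR m3 ^ 2).

Definition Nbar (N : nat) : nat := expn N 3.

Definition energy (N : nat) (ks : 'I_(Nbar N) -> Mom) : R :=
  \big[Rplus/0]_(j < Nbar N) (knorm2 N (ks j) / 2).

(* omega0 is the minimal eigenvalue of -1/2 Delta on antisymmetric functions,
   i.e. the minimal energy of Nbar pairwise distinct momenta in Xi. *)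
Definition is_min_energy (N : nat) (w : R) : Prop :=
  (exists ks : 'I_(Nbar N) -> Mom, injective ks /\ energy N ks = w) /\
  (forall ks : 'I_(Nbar N) -> Mom, injective ks -> w <= energy N ks).

(* A point xbar of Tbar = T^Nbar is given by its real coordinates
   y : nat -> R; particle l sits at (y (3l), y (3l+1), y (3l+2)). *)
Definition pos (y : nat -> R) (l : nat) : R * R * R :=
  (y (muln 3 l), y (addn (muln 3 l) 1), y (addn (muln 3 l) 2)).

Definition sgnR (n : nat) (s : 'S_n) : R := if odd_perm s then -1 else 1.

Definition wedge (N : nat) (ks : 'I_(Nbar N) -> Mom) (y : nat -> R) : Cx :=
  Cscale (/ sqrt (INR (factorial (Nbar N))))
    (\big[Cadd/C0]_(s : 'S_(Nbar N))
       Cscale (sgnR (Nbar N) s)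
         (\big[Cmul/C1]_(j < Nbar N) Cexpi (kdot N (ks j) (pos y (s j))))).

Definition psi (N M : nat) (C : 'I_M -> Cx) (K : 'I_M -> 'I_(Nbar N) -> Mom)
  (y : nat -> R) : Cx :=
  \big[Cadd/C0]_(t < M) Cmul (C t) (wedge N (K t) y).

Definition is_RInt (f : R -> R) (a b v : R) : Prop :=
  exists pr : Riemann_integrable f a b, RiemannInt pr = v.

Definition upd (y : nat -> R) (i : nat) (t : R) : nat -> R :=
  fun n => if Nat.eqb n i then t else y n.

(* iint L vs F y v : the iterated integral of F over the coordinates listed in vs,
   each over [0, L] (one period), the other coordinates fixed as in y, equals v. *)
Fixpoint iint (L : R) (vs : list nat) (F : (nat -> R) -> R) (y : nat -> R) (v : R)
  : Prop :=
  match vs with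
  | nil => F y = v
  | i :: vs' => exists g : R -> R,
      (forall t, iint L vs' F (upd y i t) (g t)) /\ is_RInt g 0 L v
  end.

Definition all_coords (N : nat) : list nat := iota 0 (muln 3 (Nbar N)).

Definition other_coords (N : nat) (j : nat) : list nat :=
  flatten [seq (if Nat.eqb l j then [::] else [:: (muln 3 l); (addn (muln 3 l) 1); (addn (muln 3 l) 2)])
          | l <- iota 0 (Nbar N)].

(* a point with x_j = x (other coordinates 0, to be integrated out) *)
Definition at_part (j : nat) (x : R * R * R) : nat -> R :=
  let '(x1, x2, x3) := x in
  fun n => if Nat.eqb n (muln 3 j) then x1
           else if Nat.eqb n (addn (muln 3 j) 1) then x2
           else if Nat.eqb n (addn (muln 3 j) 2) then x3 else 0.

Definition marginal_is (N M : nat) (C : 'I_M -> Cx) (K : 'I_M -> 'I_(Nbar N) -> Mom)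
  (j : nat) (x : R * R * R) (v : R) : Prop :=
  iint (INR N) (other_coords N j) (fun y => Cnorm2 (psi N M C K y)) (at_part j x) v.

Definition rho_e_is (N M : nat) (e : R) (C : 'I_M -> Cx)
  (K : 'I_M -> 'I_(Nbar N) -> Mom) (x : R * R * R) (r : R) : Prop :=
  exists v : nat -> R,
    (forall j, is_true (ltn j (Nbar N)) -> marginal_is N M C K j x (v j)) /\
    r = - e * \big[Rplus/0]_(j < Nbar N) v j.

Definition ndiff (N : nat) (ks ks' : 'I_(Nbar N) -> Mom) : nat :=
  #|[set j : 'I_(Nbar N) | ks j \notin [seq ks' i | i : 'I_(Nbar N)]]|.

(* Expanding the exterior products, psi is a finite sum of plane waves indexed
   by the terms (t, s) (a momentum set of the expansion and a permutation), so
   |psi|^2 is a trigonometric sum over pairs of terms whose phase is affine in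
   every coordinate, with frequencies in (2 pi / N) Z.  Integrating a coordinate
   over one period kills every pair whose frequency in that coordinate does not
   vanish.  Once all particles but one are integrated out, a surviving
   off-diagonal pair would consist of two momentum configurations differing at
   one particle only, which (adr) and the injectivity of each momentum set rule
   out.  Hence every one-particle marginal equals N^(3 (Nbar - 1)) times the
   diagonal weight, whatever x, while Z is N^(3 Nbar) times the same weight; the
   ratio is N^3 = Nbar. *)

From Pilot Require Import Defs.
From HB Require Import structures.
From mathcomp Require Import all_boot all_fingroup.
From mathcomp Require Import ssralg ssrint.
From Stdlib Require Import Reals Lra FunctionalExtensionality Classical.
From Coquelicot Require Import Coquelicot.
From mathcomp Require Import zify.

Local Open Scope R_scope.

Lemma Rplus_associative : associative Rplus.
Proof. by move=> x y z; rewrite Rplus_assoc. Qed.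

HB.instance Definition _ :=
  Monoid.isComLaw.Build R 0 Rplus Rplus_associative Rplus_comm Rplus_0_l.

Lemma big_Rmult_distrr (I : Type) (r : seq I) (P : pred I) (F : I -> R) c :
  c * \big[Rplus/0]_(i <- r | P i) F i = \big[Rplus/0]_(i <- r | P i) (c * F i).
Proof. by elim/big_rec2: _ => [|i x y _ <-]; ring. Qed.

Lemma big_Rminus (I : Type) (r : seq I) (P : pred I) (F G : I -> R) :
  \big[Rplus/0]_(i <- r | P i) (F i - G i) =
  \big[Rplus/0]_(i <- r | P i) F i - \big[Rplus/0]_(i <- r | P i) G i.
Proof. by elim/big_rec3: _ => [|i x y z _ ->]; ring. Qed.

Lemma big_pair_curry (I J : finType) (F : I * J -> R) :
  \big[Rplus/0]_(p : I * J) F p = \big[Rplus/0]_(i : I) \big[Rplus/0]_(j : J) F (i, j).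
Proof. by rewrite pair_bigA; apply: eq_bigr => [[]]. Qed.

Lemma big_Rmult_pair (I J : finType) (u : I -> R) (w : J -> R) :
  \big[Rplus/0]_(i : I) u i * \big[Rplus/0]_(j : J) w j =
  \big[Rplus/0]_(p : I * J) (u p.1 * w p.2).
Proof.
rewrite big_pair_curry Rmult_comm big_Rmult_distrr; apply: eq_bigr => i _.
by rewrite Rmult_comm big_Rmult_distrr.
Qed.

Lemma big_pair_diag (X : finType) (P : pred (X * X)) (F : X * X -> R) :
  (forall a, P (a, a)) -> (forall x, P x -> x.1 <> x.2 -> F x = 0) ->
  \big[Rplus/0]_(x | P x) F x = \big[Rplus/0]_(a : X) F (a, a).
Proof.
move=> Pdiag F0.
rewrite (bigID (fun x => x.1 == x.2)) /= [X in _ + X]big1 ?Rplus_0_r; last first.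
  by move=> x /andP[Px /eqP]; apply: F0.
transitivity (\big[Rplus/0]_(a : X) \big[Rplus/0]_(b | P (a, b) && (a == b)) F (a, b)).
  by rewrite pair_big_dep; apply: eq_big => [[a b]|[a b] _].
apply: eq_bigr => a _; rewrite (eq_bigl (pred1 a)) ?big_pred1_eq // => b /=.
by case: (eqVneq a b) => [->|_]; rewrite ?Pdiag ?eqxx ?andbF.
Qed.

Lemma iter_Rplus n c : iter n (Rplus c) 0 = INR n * c.
Proof. by elim: n => [|n IH]; rewrite ?iterS ?IH ?S_INR /=; ring. Qed.

Lemma Nat_eqbE (a b : nat) : Nat.eqb a b = (a == b).
Proof. by case: (Nat.eqb_spec a b) => [->|/eqP/negbTE]; rewrite ?eqxx. Qed.

Definition is_zero (r : R) : bool := if Req_EM_T r 0 then true else false.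

Lemma is_zeroP r : reflect (r = 0) (is_zero r).
Proof. by rewrite /is_zero; case: Req_EM_T => h; constructor. Qed.

Definition is_2PI_multiple (r : R) : Prop :=
  exists n1 n2 : nat, r = 2 * PI * (INR n1 - INR n2).

Lemma is_2PI_multiple0 : is_2PI_multiple 0.
Proof. by exists 0%nat, 0%nat; ring. Qed.

Lemma is_2PI_multipleD r s :
  is_2PI_multiple r -> is_2PI_multiple s -> is_2PI_multiple (r + s).
Proof.
move=> [a1 [a2 ->]] [b1 [b2 ->]]; exists (a1 + b1)%nat, (a2 + b2)%nat.
by rewrite !plus_INR; ring.
Qed.

Lemma is_2PI_multipleB r s :
  is_2PI_multiple r -> is_2PI_multiple s -> is_2PI_multiple (r - s).
Proof.
move=> [a1 [a2 ->]] [b1 [b2 ->]]; exists (a1 + b2)%nat, (a2 + b1)%nat.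
by rewrite !plus_INR; ring.
Qed.

Lemma is_2PI_multiple_intR (z : int) : is_2PI_multiple (2 * PI * intR z).
Proof. by case: z => n; [exists n, 0%nat | exists 0%nat, n.+1] => /=; ring. Qed.

Lemma cos_add_2PI_multiple x r : is_2PI_multiple r -> cos (x + r) = cos x.
Proof.
move=> [n1 [n2 ->]].
rewrite -(cos_period _ n2) -[RHS](cos_period _ n1); congr cos; ring.
Qed.

Lemma sin_add_2PI_multiple x r : is_2PI_multiple r -> sin (x + r) = sin x.
Proof.
move=> [n1 [n2 ->]].
rewrite -(sin_period _ n2) -[RHS](sin_period _ n1); congr sin; ring.
Qed.

Lemma Defs_is_RInt_of (f : R -> R) a b v :
  RInt.is_RInt f a b v -> Defs.is_RInt f a b v.
Proof.
move=> Hf; have ex : ex_RInt f a b by exists v.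
exists (ex_RInt_Reals_0 _ _ _ ex); rewrite -RInt_Reals; exact: is_RInt_unique.
Qed.

Lemma Defs_is_RInt_unique f a b v w :
  Defs.is_RInt f a b v -> Defs.is_RInt f a b w -> v = w.
Proof. by move=> [p1 <-] [p2 <-]; rewrite -!RInt_Reals. Qed.

Lemma iint_unique {L vs F y v w} : iint L vs F y v -> iint L vs F y w -> v = w.
Proof.
elim: vs y v w => [|i vs IH] y v w /=; first by move=> <- <-.
move=> [g1 [Hg1 Ig1]] [g2 [Hg2 Ig2]].
have eg : g1 = g2.
  by apply: functional_extensionality => t; exact: IH (Hg1 t) (Hg2 t).
by rewrite eg in Ig1; exact: Defs_is_RInt_unique Ig1 Ig2.
Qed.

Lemma upd_id y i : upd y i (y i) = y.
Proof.
by apply: functional_extensionality => n; rewrite /upd; case: Nat.eqb_spec => [->|].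
Qed.

Lemma is_RInt_big (X : Type) (r : seq X) (P : pred X) (f : X -> R -> R) (v : X -> R)
    a b :
  (forall x, P x -> RInt.is_RInt (f x) a b (v x)) ->
  RInt.is_RInt (fun t => \big[Rplus/0]_(x <- r | P x) f x t) a b
    (\big[Rplus/0]_(x <- r | P x) v x).
Proof.
move=> Hf; elim: r => [|x r IH].
  apply: (is_RInt_ext (fun _ => 0)); first by move=> t _; rewrite big_nil.
  by rewrite big_nil; have := is_RInt_const a b 0; rewrite scal_zero_r.
rewrite big_cons; case Px: (P x).
  apply: (is_RInt_ext (fun t => f x t + \big[Rplus/0]_(x <- r | P x) f x t)).
    by move=> t _; rewrite big_cons Px.
  exact: is_RInt_plus (Hf x Px) IH.
by apply: (is_RInt_ext _ _ _ _ _ _ IH) => t _; rewrite big_cons Px.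
Qed.

Lemma is_RInt_sinusoid L p q c d : is_2PI_multiple (c * L) ->
  RInt.is_RInt (fun t => p * cos (c * t + d) + q * sin (c * t + d)) 0 L
    (if is_zero c then L * (p * cos d + q * sin d) else 0).
Proof.
move=> Hper; case: is_zeroP => [->|c_neq0].
  apply: (is_RInt_ext (fun _ => p * cos d + q * sin d)).
    by move=> t _; rewrite Rmult_0_l Rplus_0_l.
  by have := is_RInt_const 0 L (p * cos d + q * sin d); rewrite Rminus_0_r.
pose G t := (p * sin (c * t + d) - q * cos (c * t + d)) / c.
have G_periodic : minus (G L) (G 0) = 0.
  rewrite /G /minus /plus /opp /= (Rplus_comm (c * L)).
  rewrite cos_add_2PI_multiple // sin_add_2PI_multiple // Rmult_0_r Rplus_0_l.
  by field.
have : RInt.is_RInt (fun t => p * cos (c * t + d) + q * sin (c * t + d)) 0 L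
    (minus (G L) (G 0)).
  apply: (is_RInt_derive G) => t _; rewrite /G.
    by auto_derive => //; field.
  by apply: ex_derive_continuous; auto_derive.
by rewrite G_periodic.
Qed.

Section TrigonometricSum.

Variables (L : R) (X : finType) (p q : X -> R).
Variables (phase : X -> (nat -> R) -> R) (freq : X -> nat -> R).
Hypothesis phase_affine :
  forall x y i t, phase x (upd y i t) = freq x i * t + phase x (upd y i 0).
Hypothesis freq_periodic : forall x i, is_2PI_multiple (freq x i * L).

Definition sinusoid x y := p x * cos (phase x y) + q x * sin (phase x y).

Lemma iint_trig_sum vs y :
  iint L vs (fun z => \big[Rplus/0]_(x : X) sinusoid x z) y
    (L ^ size vs * \big[Rplus/0]_(x | all (fun i => is_zero (freq x i)) vs) sinusoid x y).
Proof.
elim: vs y => [|i vs IH] y /=; first by rewrite Rmult_1_l; apply: eq_bigl.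
pose P x := all (fun v => is_zero (freq x v)) vs.
exists (fun t => L ^ size vs * \big[Rplus/0]_(x | P x) sinusoid x (upd y i t)).
split=> //; apply: Defs_is_RInt_of.
have -> : L * L ^ size vs *
    \big[Rplus/0]_(x | is_zero (freq x i) && P x) sinusoid x y =
  L ^ size vs * \big[Rplus/0]_(x | P x)
    (if is_zero (freq x i) then L * sinusoid x y else 0).
  rewrite -big_mkcondr -big_Rmult_distrr /=.
  rewrite [in RHS](eq_bigl (fun x => is_zero (freq x i) && P x)) => [|x]; first by ring.
  by rewrite andbC.
apply: (is_RInt_scal _ _ _ (L ^ size vs)); apply: is_RInt_big => x _.
pose d := phase x (upd y i 0).
apply: (is_RInt_ext (fun t =>
    p x * cos (freq x i * t + d) + q x * sin (freq x i * t + d))).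
  by move=> t _; rewrite /sinusoid phase_affine.
have := is_RInt_sinusoid L (p x) (q x) (freq x i) d (freq_periodic x i).
case: is_zeroP => // freq0.
by rewrite /sinusoid -{1 2}(upd_id y i) phase_affine freq0 Rmult_0_l Rplus_0_l.
Qed.

End TrigonometricSum.

Arguments sinusoid {X} p q phase x y.

Lemma eq_perm_except1 (T : finType) (s s' : {perm T}) (j : T) :
  (forall x, x != j -> s x = s' x) -> s = s'.
Proof.
move=> ss'; apply/permP => x; case: (eqVneq x j) => [->|]; last exact: ss'.
pose k := (s^-1)%g (s' j).
have s_k : s k = s' j by rewrite permKV.
case: (eqVneq k j) => [k_eq_j|k_neq_j]; first by rewrite -{1}k_eq_j s_k.
have := ss' k k_neq_j; rewrite s_k => /perm_inj k_eq_j.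
by rewrite k_eq_j eqxx in k_neq_j.
Qed.

Lemma ndiff_le1 N (ks ks' : 'I_(Nbar N) -> Mom) (j : 'I_(Nbar N)) :
  (forall i, i != j -> ks i \in [seq ks' i | i : 'I_(Nbar N)]) ->
  (ndiff N ks ks' <= 1)%nat.
Proof.
move=> ks_in; rewrite /ndiff -(cards1 j); apply: subset_leq_card.
apply/subsetP => i; rewrite !inE; apply: contraR; exact: ks_in.
Qed.

Definition mom_comp (m : Mom) (r : nat) : int :=
  let '(m1, m2, m3) := m in match r with 0 => m1 | 1 => m2 | _ => m3 end.

Lemma coord_eq (l r i : nat) : (r < 3)%nat ->
  (3 * l + r == i)%nat = (i %/ 3 == l) && (i %% 3 == r)%nat.
Proof.
move=> r_lt3; apply/eqP/andP => [<-|[/eqP <- /eqP <-]]; first by split; apply/eqP; lia.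
by rewrite mulnC -divn_eq.
Qed.

Lemma eq_mom (m m' : Mom) :
  (forall r, (r < 3)%nat -> mom_comp m r = mom_comp m' r) -> m = m'.
Proof.
case: m => [[a b] c]; case: m' => [[a' b'] c'] eq_comp.
by move: (eq_comp 0%nat) (eq_comp 1%nat) (eq_comp 2%nat) => /= -> // -> // -> .
Qed.

Lemma intR_inj : injective intR.
Proof.
have INR_S_gt0 n : 0 < INR n.+1 by apply: lt_0_INR; lia.
case=> n [] n' eq_nn'; cbn [intR] in eq_nn'.
- by rewrite (INR_eq _ _ eq_nn').
- by have := pos_INR n; have := INR_S_gt0 n'; lra.
- by have := pos_INR n'; have := INR_S_gt0 n; lra.
- by have [->] : n.+1 = n'.+1 by apply: INR_eq; lra.
Qed.

Lemma mem_other_coords {N j l r : nat} :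
  (l < Nbar N)%nat -> l != j -> (r < 3)%nat -> (3 * l + r)%nat \in other_coords N j.
Proof.
move=> l_lt l_neq_j r_lt3; apply/flatten_mapP; exists l; first by rewrite mem_iota.
rewrite Nat_eqbE (negbTE l_neq_j) !inE.
by case: r r_lt3 => [|[|[|r]]] //= _; rewrite ?addn0 eqxx ?orbT.
Qed.

Lemma other_coords_sub N j : {subset other_coords N j <= all_coords N}.
Proof.
move=> i /flatten_mapP[l]; rewrite mem_iota add0n => /andP[_ l_lt].
rewrite /all_coords mem_iota add0n Nat_eqbE; case: (l == j) => //.
by rewrite !inE => /or3P[] /eqP ->; lia.
Qed.

Lemma size_other_coords N j : (j < Nbar N)%nat ->
  size (other_coords N j) = (3 * (Nbar N - 1))%nat.
Proof.
move=> j_lt; rewrite /other_coords size_flatten /shape -map_comp sumnE big_map.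
rewrite (big_nth 0%nat) size_iota big_mkord (bigD1 (Ordinal j_lt)) //=.
rewrite nth_iota // Nat_eqbE eqxx.
rewrite (eq_bigr (fun _ => 3%nat)) ?sum_nat_const => [|l l_neq_j]; last first.
  rewrite nth_iota // Nat_eqbE; case: eqP => // l_eq_j.
  by move: l_neq_j; rewrite (_ : l = Ordinal j_lt) ?eqxx //; apply: val_inj.
by rewrite cardC1 card_ord /= add0n mulnC subn1.
Qed.

Lemma INR_Nbar N : INR (Nbar N) = INR N ^ 3.
Proof. by rewrite /Nbar !expnS expn0 muln1 !mult_INR /=; ring. Qed.

Lemma re_sum (I : Type) (r : seq I) (P : pred I) (F : I -> Cx) :
  re (\big[Cadd/C0]_(i <- r | P i) F i) = \big[Rplus/0]_(i <- r | P i) re (F i).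
Proof. exact: (big_morph re). Qed.

Lemma im_sum (I : Type) (r : seq I) (P : pred I) (F : I -> Cx) :
  im (\big[Cadd/C0]_(i <- r | P i) F i) = \big[Rplus/0]_(i <- r | P i) im (F i).
Proof. exact: (big_morph im). Qed.

Lemma Cexpi_sum (I : Type) (r : seq I) (P : pred I) (F : I -> R) :
  \big[Cmul/Defs.C1]_(i <- r | P i) Cexpi (F i) =
  Cexpi (\big[Rplus/0]_(i <- r | P i) F i).
Proof.
apply/esym/(big_morph Cexpi); last by rewrite /Cexpi cos_0 sin_0.
by move=> x y; rewrite /Cexpi /Cmul /= cos_plus sin_plus; congr mkC; ring.
Qed.

Section Expansion.

Variables (N M : nat) (C : 'I_M -> Cx) (K : 'I_M -> 'I_(Nbar N) -> Mom).

Local Notation term := ('I_M * 'S_(Nbar N))%type.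

Definition term_mom (a : term) (l : 'I_(Nbar N)) : Mom := K a.1 ((a.2)^-1 l)%g.

Definition term_phase (a : term) (y : nat -> R) : R :=
  \big[Rplus/0]_(l < Nbar N) kdot N (term_mom a l) (Defs.pos y l).

Definition wedge_norm : R := / sqrt (INR (factorial (Nbar N))).

Definition term_re (a : term) : R := re (C a.1) * wedge_norm * sgnR (Nbar N) a.2.

Definition term_im (a : term) : R := im (C a.1) * wedge_norm * sgnR (Nbar N) a.2.

Lemma term_phaseE t (s : 'S_(Nbar N)) y :
  \big[Rplus/0]_(j < Nbar N) kdot N (K t j) (Defs.pos y (s j)) = term_phase (t, s) y.
Proof.
rewrite /term_phase [in RHS](reindex_inj (@perm_inj _ s)) /=.
by apply: eq_bigr => j _; rewrite /term_mom permK.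
Qed.

Lemma re_psi y :
  re (psi N M C K y) = \big[Rplus/0]_(a : term)
    (term_re a * cos (term_phase a y) - term_im a * sin (term_phase a y)).
Proof.
rewrite /psi re_sum big_pair_curry; apply: eq_bigr => t _.
rewrite /wedge -/wedge_norm; cbn [re im Cmul Cscale].
rewrite !re_sum !im_sum !big_Rmult_distrr -big_Rminus; apply: eq_bigr => s _.
cbn [re im Cscale]; rewrite Cexpi_sum term_phaseE /term_re /term_im.
(* The two occurrences of the phase differ in their implicit type annotations,
   which [ring] would treat as distinct atoms. *)
cbn [re im Cexpi fst snd]; move: (term_phase (t, s) y) => th; ring.
Qed.

Lemma im_psi y :
  im (psi N M C K y) = \big[Rplus/0]_(a : term)
    (term_re a * sin (term_phase a y) + term_im a * cos (term_phase a y)).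
Proof.
rewrite /psi im_sum big_pair_curry; apply: eq_bigr => t _.
rewrite /wedge -/wedge_norm; cbn [re im Cmul Cscale].
rewrite !re_sum !im_sum !big_Rmult_distrr -big_split /=; apply: eq_bigr => s _.
cbn [re im Cscale]; rewrite Cexpi_sum term_phaseE /term_re /term_im.
cbn [re im Cexpi fst snd]; move: (term_phase (t, s) y) => th; ring.
Qed.

Definition pair_phase (x : term * term) (y : nat -> R) : R :=
  term_phase x.1 y - term_phase x.2 y.

Definition pair_cos (x : term * term) : R :=
  term_re x.1 * term_re x.2 + term_im x.1 * term_im x.2.

Definition pair_sin (x : term * term) : R :=
  term_re x.1 * term_im x.2 - term_im x.1 * term_re x.2.

Lemma Cnorm2_psi y :
  Cnorm2 (psi N M C K y) =
  \big[Rplus/0]_(x : term * term) sinusoid pair_cos pair_sin pair_phase x y.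
Proof.
rewrite /Cnorm2 re_psi im_psi !big_Rmult_pair -big_split /=; apply: eq_bigr => x _.
rewrite /sinusoid /pair_cos /pair_sin /pair_phase cos_minus sin_minus.
move: (term_re x.1) (term_re x.2) (term_im x.1) (term_im x.2) => r1 r2 i1 i2.
move: (term_phase x.1 y) (term_phase x.2 y) => th1 th2; ring.
Qed.

(* Coordinate [y i] is component [i %% 3] of particle [i %/ 3]. *)
Definition mom_freq (m : Mom) (l i : nat) : R :=
  if i %/ 3 == l then 2 * PI / INR N * intR (mom_comp m (i %% 3)) else 0.

Lemma kdot_upd m y (l i : nat) t :
  kdot N m (Defs.pos (upd y i t) l) =
  mom_freq m l i * t + kdot N m (Defs.pos (upd y i 0) l).
Proof.
have coord0 : (3 * l == i)%nat = (i %/ 3 == l) && (i %% 3 == 0)%nat.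
  by rewrite -coord_eq ?addn0.
case: m => [[m1 m2] m3]; rewrite /kdot /Defs.pos /upd /mom_freq !Nat_eqbE.
rewrite coord0 !coord_eq //; case: (i %/ 3 == l) => /=; last by ring.
have : (i %% 3 < 3)%nat by rewrite ltn_mod.
by case: (i %% 3) => [|[|[|r]]] //= _; ring.
Qed.

Definition term_freq (a : term) (i : nat) : R :=
  \big[Rplus/0]_(l < Nbar N) mom_freq (term_mom a l) l i.

Lemma term_phase_affine a y i t :
  term_phase a (upd y i t) = term_freq a i * t + term_phase a (upd y i 0).
Proof.
rewrite /term_phase /term_freq; under eq_bigr do rewrite kdot_upd.
rewrite big_split /= Rmult_comm big_Rmult_distrr; congr (_ + _).
by apply: eq_bigr => l _; ring.
Qed.

Hypothesis N_gt0 : (0 < N)%nat.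

Lemma term_freq_periodic a i : is_2PI_multiple (term_freq a i * INR N).
Proof.
have N_neq0 : INR N <> 0 by apply: not_0_INR; lia.
rewrite /term_freq Rmult_comm big_Rmult_distrr.
apply: (big_ind is_2PI_multiple) => [|r s|l _].
- exact: is_2PI_multiple0.
- exact: is_2PI_multipleD.
rewrite /mom_freq; case: ifP => _; last by rewrite Rmult_0_r; exact: is_2PI_multiple0.
rewrite (_ : INR N * _ = 2 * PI * intR (mom_comp (term_mom a l) (i %% 3))).
  exact: is_2PI_multiple_intR.
by field.
Qed.

Lemma term_freq_coord a (l : 'I_(Nbar N)) r : (r < 3)%nat ->
  term_freq a (3 * l + r) = 2 * PI / INR N * intR (mom_comp (term_mom a l) r).
Proof.
move=> r_lt3; have /andP[/eqP div_l /eqP mod_r] :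
    ((3 * l + r) %/ 3 == l) && ((3 * l + r) %% 3 == r)%nat by rewrite -coord_eq.
rewrite /term_freq (bigD1 l) //= big1 => [|l' l'_neq_l].
  by rewrite /mom_freq div_l mod_r eqxx Rplus_0_r.
rewrite /mom_freq div_l; case: eqP => // /val_inj l_eq.
by rewrite l_eq eqxx in l'_neq_l.
Qed.

Definition pair_freq (x : term * term) (i : nat) : R :=
  term_freq x.1 i - term_freq x.2 i.

Lemma pair_phase_affine x y i t :
  pair_phase x (upd y i t) = pair_freq x i * t + pair_phase x (upd y i 0).
Proof.
rewrite /pair_phase /pair_freq (term_phase_affine x.1 y i t).
by rewrite (term_phase_affine x.2 y i t); ring.
Qed.

Lemma pair_freq_periodic x i : is_2PI_multiple (pair_freq x i * INR N).
Proof.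
rewrite /pair_freq Rmult_minus_distr_r.
by apply: is_2PI_multipleB; apply: term_freq_periodic.
Qed.

Lemma term_mom_eq_except (x : term * term) (j : 'I_(Nbar N)) :
  all (fun i => is_zero (pair_freq x i)) (other_coords N j) ->
  forall l, l != j -> term_mom x.1 l = term_mom x.2 l.
Proof.
move=> /allP freq0 l l_neq_j; apply: eq_mom => r r_lt3.
have /is_zeroP := freq0 _ (mem_other_coords (ltn_ord l) l_neq_j r_lt3).
rewrite /pair_freq !term_freq_coord // => freq_eq.
have unit_freq_gt0 : 0 < 2 * PI / INR N.
  by apply: Rdiv_lt_0_compat; [have := PI_RGT_0 | apply: lt_0_INR; lia]; lra.
by apply: intR_inj; apply: (Rmult_eq_reg_l (2 * PI / INR N)); lra.
Qed.

Hypothesis K_inj : forall t, injective (K t).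
Hypothesis adr : forall t t', t <> t' -> C t <> C0 -> C t' <> C0 ->
  (2 <= ndiff N (K t) (K t'))%nat.

(* Two nonvanishing terms whose momentum configurations differ at most at one
   particle coincide: by (adr) they come from the same set [K t], and then,
   [K t] being injective, from the same permutation. *)
Lemma term_eq_of_mom_eq_except (a b : term) (j : 'I_(Nbar N)) :
  C a.1 <> C0 -> C b.1 <> C0 ->
  (forall l, l != j -> term_mom a l = term_mom b l) -> a = b.
Proof.
case: a b => [t s] [t' s'] /= Ct Ct'; rewrite /term_mom /= => eq_mom_ab.
have eq_tt' : t = t'.
  case: (eqVneq t t') => // /eqP t_neq_t'; have := adr _ _ t_neq_t' Ct Ct'.
  rewrite ltnNge (ndiff_le1 _ _ _ ((s^-1)%g j)) // => i i_neq.
  have s_i_neq_j : s i != j by apply: contra i_neq => /eqP <-; rewrite permK.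
  by rewrite -{1}(permK s i) eq_mom_ab // map_f ?mem_enum.
subst t'; congr pair; apply: invg_inj; apply: (eq_perm_except1 _ _ _ j) => l l_neq_j.
by apply: (K_inj t); apply: eq_mom_ab.
Qed.

Definition diag_weight : R :=
  \big[Rplus/0]_(a : term) (term_re a * term_re a + term_im a * term_im a).

Lemma pair_freq_diag a i : pair_freq (a, a) i = 0.
Proof. exact: Rminus_diag. Qed.

Lemma sum_sinusoid_diag (P : pred (term * term)) (j : 'I_(Nbar N)) y :
  (forall a, P (a, a)) ->
  (forall x, P x -> all (fun i => is_zero (pair_freq x i)) (other_coords N j)) ->
  \big[Rplus/0]_(x | P x) sinusoid pair_cos pair_sin pair_phase x y = diag_weight.
Proof.
move=> Pdiag P_freq0; rewrite big_pair_diag //.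
  apply: eq_bigr => a _.
  by rewrite /sinusoid /pair_cos /pair_sin /pair_phase /= Rminus_diag cos_0 sin_0; ring.
move=> [a b] Pab /= a_neq_b.
have [Ca0|Ca] := classic (C a.1 = C0).
  by rewrite /sinusoid /pair_cos /pair_sin /term_re /term_im Ca0 /=; ring.
have [Cb0|Cb] := classic (C b.1 = C0).
  by rewrite /sinusoid /pair_cos /pair_sin /term_re /term_im Cb0 /=; ring.
case: a_neq_b; apply: (term_eq_of_mom_eq_except _ _ j Ca Cb).
exact: term_mom_eq_except (P_freq0 _ Pab).
Qed.

Lemma iint_psi vs (j : 'I_(Nbar N)) y : {subset other_coords N j <= vs} ->
  iint (INR N) vs (fun z => Cnorm2 (psi N M C K z)) y (INR N ^ size vs * diag_weight).
Proof.
move=> other_sub_vs; rewrite (functional_extensionality _ _ Cnorm2_psi).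
pose P x := all (fun i => is_zero (pair_freq x i)) vs.
rewrite -(sum_sinusoid_diag P j y).
- exact: iint_trig_sum pair_phase_affine pair_freq_periodic _ _.
- by move=> a; apply/allP => i _; apply/is_zeroP; apply: pair_freq_diag.
- by move=> x /allP freq0; apply/allP => i /other_sub_vs; apply: freq0.
Qed.

End Expansion.

Theorem lemma4p1 (N : nat) (HN : is_true (ltn 0%nat N)) (e Z : R) (He : 0 < e) (HZ : 0 < Z)
  (omega0 : R) (Homega0 : is_min_energy N omega0)
  (M : nat) (C : 'I_M -> Cx) (K : 'I_M -> 'I_(Nbar N) -> Mom)
  (Hdistinct : forall t, injective (K t))
  (Hsets : forall t t', t <> t' ->
      ~ exists s : 'S_(Nbar N), forall j, K t' j = K t (s j))
  (Henergy : forall t, energy N (K t) = omega0)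
  (Hadr : forall t t', t <> t' -> C t <> C0 -> C t' <> C0 ->
      is_true (leq 2%nat (ndiff N (K t) (K t'))))
  (Hnorm : iint (INR N) (all_coords N) (fun y => Cnorm2 (psi N M C K y)) (fun _ => 0) Z) :
  (forall x : R * R * R, rho_e_is N M e C K x (- e * Z)) /\
  (forall x : R * R * R, marginal_is N M C K 0%nat x (Z / INR (Nbar N))).
Proof.
have N_gt0 : (0 < N)%nat := HN.
have N_neq0 : INR N <> 0 by apply: not_0_INR; lia.
have Nbar_gt0 : (0 < Nbar N)%nat by rewrite expn_gt0 N_gt0.
have Nbar_neq0 : INR (Nbar N) <> 0 by rewrite INR_Nbar; apply: pow_nonzero.
have psi_integral := @iint_psi N M C K N_gt0 Hdistinct Hadr.
set W := diag_weight N M C.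
have Z_eq : Z = INR N ^ (3 * Nbar N) * W.
  apply: (iint_unique Hnorm); rewrite -[(3 * _)%nat](size_iota 0).
  exact: (psi_integral _ (Ordinal Nbar_gt0)) (other_coords_sub N _).
have marginal j x : (j < Nbar N)%nat -> marginal_is N M C K j x (Z / INR (Nbar N)).
  move=> j_lt; rewrite (_ : Z / _ = INR N ^ size (other_coords N j) * W).
    exact: (psi_integral _ (Ordinal j_lt)).
  rewrite Z_eq INR_Nbar size_other_coords //.
  by rewrite (_ : 3 * Nbar N = 3 * (Nbar N - 1) + 3)%nat ?pow_add; [field | lia].
split=> x; last exact: marginal.
exists (fun _ => Z / INR (Nbar N)); split=> [j|]; first exact: marginal.
by rewrite big_const_ord iter_Rplus; field.
Qed.
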